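(* For every quadrilateral $Q$ in $K^2$, the symmetric bilinear form $\langle -,-\rangle_Q$ on $K^2$ is nondegenerate.
   Context: $K$ is a field of characteristic $\neq 2$. Every line $L$ in $K^2$ has an equation $tX-uY+v=0$ normalized so that $t=1$ if $u=0$ and $u=1$ if $u\neq 0$; coefficients denoted $t_L,u_L,v_L$. A quadrilateral $Q=ABA'B'$ consists of four distinct lines $A,B,A',B'$ (sides), not all through one point, with adjacent sides ($A,B$; $B,A'$; $A',B'$; $B',A$) not parallel; opposite sides may be parallel (three sides may be concurrent). Let $\alpha=t_Au_Bu_{A'}u_{B'}-u_At_Bu_{A'}u_{B'}+u_Au_Bt_{A'}u_{B'}-u_Au_Bu_{A'}t_{B'}$, $\beta=t_Au_Bt_{A'}u_{B'}-u_At_Bu_{A'}t_{B'}$, $\gamma=t_At_Bt_{A'}u_{B'}-t_At_Bu_{A'}t_{B'}+t_Au_Bt_{A'}t_{B'}-u_At_Bt_{A'}t_{B'}$, and $\langle \mathbf v,\mathbf w\rangle_Q=\mathbf v^T\begin{pmatrix}\gamma&-\beta\\-\beta&\alpha\end{pmatrix}\mathbf w$ for $\mathbf v,\mathbf w\in K^2$. *)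

From HB Require Import structures.
From mathcomp Require Import all_boot all_order all_algebra.
Set Implicit Arguments. Unset Strict Implicit. Unset Printing Implicit Defensive.
Import GRing.Theory.
Local Open Scope ring_scope.

(* A line in K^2, given by its normalized equation t X - u Y + v = 0,
   with t = 1 if u = 0, and u = 1 if u <> 0. *)
Record line (K : fieldType) := Line {
  t_L : K; u_L : K; v_L : K;
  line_norm : ((u_L == 0) && (t_L == 1)) || (u_L == 1) }.

Definition on_line (K : fieldType) (L : line K) (x y : K) : Prop :=
  t_L L * x - u_L L * y + v_L L = 0.

Definition parallel (K : fieldType) (L M : line K) : Prop :=
  t_L L * u_L M - u_L L * t_L M = 0.

Definition quadrilateral (K : fieldType) (A B A' B' : line K) : Prop :=
  (A <> B /\ A <> A' /\ A <> B' /\ B <> A' /\ B <> B' /\ A' <> B') /\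
  ~ (exists x y : K, on_line A x y /\ on_line B x y /\
                      on_line A' x y /\ on_line B' x y) /\
  ~ parallel A B /\ ~ parallel B A' /\ ~ parallel A' B' /\ ~ parallel B' A.

Definition alphaQ (K : fieldType) (A B A' B' : line K) : K :=
  t_L A * u_L B * u_L A' * u_L B' - u_L A * t_L B * u_L A' * u_L B'
  + u_L A * u_L B * t_L A' * u_L B' - u_L A * u_L B * u_L A' * t_L B'.

Definition betaQ (K : fieldType) (A B A' B' : line K) : K :=
  t_L A * u_L B * t_L A' * u_L B' - u_L A * t_L B * u_L A' * t_L B'.

Definition gammaQ (K : fieldType) (A B A' B' : line K) : K :=
  t_L A * t_L B * t_L A' * u_L B' - t_L A * t_L B * u_L A' * t_L B'
  + t_L A * u_L B * t_L A' * t_L B' - u_L A * t_L B * t_L A' * t_L B'.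

Definition formQ_mx (K : fieldType) (A B A' B' : line K) : 'M[K]_2 :=
  \matrix_(i < 2, j < 2)
    if (i == 0) && (j == 0) then gammaQ A B A' B'
    else if (i == 1) && (j == 1) then alphaQ A B A' B'
    else - betaQ A B A' B'.

Definition formQ (K : fieldType) (A B A' B' : line K) (v w : 'cV[K]_2) : K :=
  (v^T *m formQ_mx A B A' B' *m w) 0 0.

Definition nondegenerate_form (K : fieldType) (f : 'cV[K]_2 -> 'cV[K]_2 -> K) : Prop :=
  forall v : 'cV[K]_2, (forall w : 'cV[K]_2, f v w = 0) -> v = 0.

(* The Gram matrix of <-,->_Q has determinant alpha gamma - beta^2, which factors
   as minus the product of the four cross products t_X u_Y - u_X t_Y of adjacent
   sides. Each of them is nonzero because adjacent sides are not parallel, so the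
   Gram matrix is invertible and the form is nondegenerate. *)

From mathcomp Require Import all_boot all_order all_algebra.
From mathcomp Require Import ring.
Local Open Scope ring_scope.
Import GRing.Theory.

Lemma bilinear_mx_nondegenerate (R : comUnitRingType) n (M : 'M[R]_n) (v : 'cV_n) :
  M \in unitmx -> (forall w : 'cV_n, (v^T *m M *m w) 0 0 = 0) -> v = 0.
Proof.
move=> unitM vM_w0.
have vM0 : v^T *m M = 0.
  apply/rowP => j; have := vM_w0 (delta_mx j 0).
  by rewrite -colE !mxE.
by rewrite -[v]trmxK -[v^T](mulmxK unitM) vM0 mul0mx trmx0.
Qed.

Definition cross {K : fieldType} (L M : line K) : K :=
  t_L L * u_L M - u_L L * t_L M.

Lemma det_formQ_mx (K : fieldType) (A B A' B' : line K) :
  \det (formQ_mx A B A' B') =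
  - (cross A B * cross B A' * cross A' B' * cross B' A).
Proof.
rewrite (expand_det_row _ 0) !big_ord_recl big_ord0 /cofactor.
rewrite !det_mx11 !mxE /= /alphaQ /betaQ /gammaQ /cross.
ring.
Qed.

Theorem lemma2p2 (K : fieldType) (hK : (2%:R : K) != 0)
  (A B A' B' : line K) :
  quadrilateral A B A' B' -> nondegenerate_form (formQ A B A' B').
Proof.
move=> [_ [_ [nAB [nBA' [nA'B' nB'A]]]]] v.
apply: bilinear_mx_nondegenerate.
rewrite unitmxE unitfE det_formQ_mx oppr_eq0.
by rewrite !mulf_neq0 //; apply/eqP.
Qed.
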